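(* Let $D$ be an integral domain with quotient field $K$, $\star$ a semistar operation on $D$, and let $\{(T_\lambda,\ast_\lambda):\lambda\in\Lambda\}$ be a direct family (as defined in the context) with $T=\bigcup_\lambda T_\lambda$. For $E\in\overline{\mathbf F}(T)$ set $E^{\ast^\Lambda}:=\bigcup_{\lambda\in\Lambda}E^{(\ast_\lambda)_f}$. Then: (1) $\ast^\Lambda$ is a semistar operation of finite type on $T$; (2) if $T_\lambda$ is $(\star,\ast_\lambda)$-linked to $D$ for every $\lambda\in\Lambda$, then $T$ is $(\star,\ast^\Lambda)$-linked to $D$; (3) if $T_\lambda$ is $(\star,t_{T_\lambda})$-linked to $D$ for every $\lambda\in\Lambda$, then $T$ is $(\star,t_T)$-linked to $D$.
   Context: Let $D$ be an integral domain with quotient field $K$. $\overline{\mathbf F}(D)$ denotes the set of all nonzero $D$-submodules of $K$ and $\mathbf f(D)$ the set of nonzero finitely generated $D$-submodules of $K$. A semistar operation on $D$ is a map $\star:\overline{\mathbf F}(D)\to\overline{\mathbf F}(D)$, $E\mapsto E^\star$, such that for all $0\ne x\in K$ and $E,F\in\overline{\mathbf F}(D)$: (1) $(xE)^\star=xE^\star$; (2) $E\subseteq F\Rightarrow E^\star\subseteq F^\star$; (3) $E\subseteq E^\star$ and $(E^\star)^\star=E^\star$. $\star_f$ is defined by $E^{\star_f}=\bigcup\{F^\star:F\in\mathbf f(D),F\subseteq E\}$; $\star$ is of finite type if $\star=\star_f$. An overring of $D$ is a ring $T$ with $D\subseteq T\subseteq K$; semistar operations on $T$ are defined likewise. For an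 overring $T$, $v_T$ is the semistar operation $E\mapsto (T:_K(T:_KE))$ on $T$ and $t_T:=(v_T)_f$. If $\star'$ is a semistar operation on an overring $T$, $T$ is $(\star,\star')$-linked to $D$ if for every nonzero finitely generated ideal $F\subseteq D$ with $F^\star=D^\star$ one has $(FT)^{\star'}=T^{\star'}$. A direct family: $\{T_\lambda:\lambda\in\Lambda\}$ is a family of overrings of $D$, directed under inclusion (for any $\alpha,\beta$ there is $\gamma$ with $T_\alpha,T_\beta\subseteq T_\gamma$), $\Lambda$ preordered by $\lambda'\le\lambda''$ iff $T_{\lambda'}\subseteq T_{\lambda''}$, $T=\bigcup_\lambda T_\lambda$, and $\ast_\lambda$ is a semistar operation on $T_\lambda$ for each $\lambda$ such that whenever $T_{\lambda_1}\subseteq T_{\lambda_2}$ and $H\in\mathbf f(T_{\lambda_1})$, one has $H^{\ast_{\lambda_1}}\subseteq (HT_{\lambda_2})^{\ast_{\lambda_2}}$. *)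

From mathcomp Require Import all_boot all_algebra.
Set Implicit Arguments. Unset Strict Implicit. Unset Printing Implicit Defensive.
Import GRing.Theory.
Local Open Scope ring_scope.

Section SemistarDefs.
Variable K : fieldType.
Implicit Types (R D T E F H : K -> Prop) (x y : K).

Definition ssub E F : Prop := forall x, E x -> F x.
Definition sseq E F : Prop := forall x, E x <-> F x.

Definition is_subring R : Prop :=
  [/\ R 0, R 1, (forall x y, R x -> R y -> R (x - y)) &
      (forall x y, R x -> R y -> R (x * y))].

Definition is_quotient_field D : Prop :=
  forall x, exists a b, [/\ D a, D b, b != 0 & x = a / b].

Definition overring D T : Prop := is_subring T /\ ssub D T.

Definition is_module R E : Prop :=
  [/\ E 0, (forall x y, E x -> E y -> E (x + y)) &
      (forall r x, R r -> E x -> E (r * x))].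

Definition Fbar R E : Prop := is_module R E /\ exists x, x != 0 /\ E x.

Fixpoint gen R (s : seq K) : K -> Prop :=
  match s with
  | [::] => fun x => x = 0
  | a :: s' => fun x => exists r y, [/\ R r, gen R s' y & x = r * a + y]
  end.

Definition fgmod R E : Prop := Fbar R E /\ exists s, sseq E (gen R s).

(* the R-submodule generated by E, i.e. E R *)
Definition ext R E : K -> Prop :=
  fun x => exists s : seq K, (forall y, y \in s -> E y) /\ gen R s x.

Definition scale x E : K -> Prop := fun y => exists e, E e /\ y = x * e.

Definition semistar_op := (K -> Prop) -> (K -> Prop).

Definition is_semistar R (st : semistar_op) : Prop :=
  [/\ (forall E, Fbar R E -> Fbar R (st E)),
      (forall x E, x != 0 -> Fbar R E -> sseq (st (scale x E)) (scale x (st E))),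
      (forall E F, Fbar R E -> Fbar R F -> ssub E F -> ssub (st E) (st F)),
      (forall E, Fbar R E -> ssub E (st E)) &
      (forall E, Fbar R E -> sseq (st (st E)) (st E))].

Definition finite_part R (st : semistar_op) : semistar_op :=
  fun E x => exists F, [/\ fgmod R F, ssub F E & st F x].

Definition finite_type R (st : semistar_op) : Prop :=
  forall E, Fbar R E -> sseq (st E) (finite_part R st E).

Definition colon T E : K -> Prop := fun x => forall e, E e -> T (x * e).

Definition v_op T : semistar_op := fun E => colon T (colon T E).
Definition t_op T : semistar_op := finite_part T (v_op T).

Definition linked D (st : semistar_op) T (st' : semistar_op) : Prop :=
  forall F, fgmod D F -> ssub F D -> sseq (st F) (st D) ->
    sseq (st' (ext T F)) (st' T).

Definition direct_family D (L : Type) (Tl : L -> K -> Prop)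
    (stl : L -> semistar_op) : Prop :=
  [/\ (forall l, overring D (Tl l)),
      (forall l, is_semistar (Tl l) (stl l)),
      (forall a b, exists c, ssub (Tl a) (Tl c) /\ ssub (Tl b) (Tl c)) &
      (forall l1 l2 H, ssub (Tl l1) (Tl l2) -> fgmod (Tl l1) H ->
         ssub (stl l1 H) (stl l2 (ext (Tl l2) H)))].

Definition union_ring (L : Type) (Tl : L -> K -> Prop) : K -> Prop :=
  fun x => exists l, Tl l x.

Definition star_Lambda (L : Type) (Tl : L -> K -> Prop)
    (stl : L -> semistar_op) : semistar_op :=
  fun E x => exists l, finite_part (Tl l) (stl l) E x.

End SemistarDefs.

From mathcomp Require Import all_boot all_algebra.
From mathcomp Require Import ring.
From Stdlib Require Import FunctionalExtensionality PropExtensionality.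
Set Implicit Arguments. Unset Strict Implicit. Unset Printing Implicit Defensive.
Import GRing.Theory.
Local Open Scope ring_scope.

(* Since the family is directed, finitely many elements of T lie in a single
   T_c, and the compatibility condition moves star_l-closures up the family.
   Hence finitely many elements of E^{ast^Lambda} all come from one finitely
   generated F <= E over one T_c, which yields the module axioms and
   idempotence of ast^Lambda.  Linkedness passes to T because T^{ast^Lambda}
   is the union of the T_c^{ast_c}.  For t-linkedness use that FT is t-linked
   exactly when (T : FT) <= T; an element z of (T : FT) maps the finitely many
   generators of F into some T_c, so z lies in (T_c : FT_c) <= T_c. *)

Section Modules.
Variable K : fieldType.
Implicit Types (R E F M : K -> Prop) (s : seq K) (x y z : K).

Lemma sseq_eq E F : sseq E F -> E = F.
Proof.
move=> h; apply: functional_extensionality => x.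
exact: propositional_extensionality (h x).
Qed.

Lemma subrD R x y : is_subring R -> R x -> R y -> R (x + y).
Proof.
case=> R0 _ RB _ Rx Ry; have -> : x + y = x - (0 - y) by ring.
by apply: (RB) => //; apply: RB.
Qed.

Lemma subring_module R : is_subring R -> is_module R R.
Proof.
move=> hR; have [R0 _ _ RM] := hR; split=> // x y; exact: subrD.
Qed.

Lemma subring_Fbar R : is_subring R -> Fbar R R.
Proof.
move=> hR; split; first exact: subring_module.
by exists 1; split; [exact: oner_neq0 | case: hR].
Qed.

Lemma mull_preim_module R z : is_subring R -> is_module R (fun e => R (z * e)).
Proof.
move=> hR; have [R0 _ _ RM] := hR; split.
- by rewrite mulr0.
- by move=> x y hx hy; rewrite mulrDr; apply: subrD.
- move=> r x hr hx; have -> : z * (r * x) = r * (z * x) by ring.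
  exact: RM.
Qed.

Lemma module_restrict_scalars R R' E : ssub R' R -> is_module R E -> is_module R' E.
Proof. by move=> hR' [E0 ED EM]; split=> // r x /hR'; apply: EM. Qed.

Lemma gen_module R s : is_subring R -> is_module R (gen R s).
Proof.
move=> hR; have [R0 R1 RB RM] := hR.
elim: s => [|a s [IH0 IHD IHM]] /=.
- split=> //; first by move=> x y -> ->; rewrite addr0.
  by move=> r x _ ->; rewrite mulr0.
- split.
  + by exists 0, 0; rewrite mul0r addr0.
  + move=> x y [r1 [y1 [Hr1 Hy1 ->]]] [r2 [y2 [Hr2 Hy2 ->]]].
    exists (r1 + r2), (y1 + y2); split; [exact: subrD | exact: IHD | ring].
  + move=> r x Hr [r1 [y1 [Hr1 Hy1 ->]]].
    exists (r * r1), (r * y1); split; [exact: RM | exact: IHM | ring].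
Qed.

Lemma gen_sub_module R M s :
  is_module R M -> (forall y, y \in s -> M y) -> ssub (gen R s) M.
Proof.
case=> M0 MD MM; elim: s => [|a s IH] hs x /=; first by move=> ->.
move=> [r [y [Hr Hy ->]]]; apply: MD.
- by apply: MM => //; apply: hs; rewrite mem_head.
- by apply: IH => // z hz; apply: hs; rewrite inE hz orbT.
Qed.

Lemma mem_gen R s x : is_subring R -> x \in s -> gen R s x.
Proof.
move=> hR; have [R0 R1 _ _] := hR.
elim: s => [|b s IH] //=; rewrite inE => /predU1P [-> | hx].
- exists 1, 0; split=> //; first by case: (gen_module s hR).
  by rewrite mul1r addr0.
- by exists 0, x; split=> //; [exact: IH | rewrite mul0r add0r].
Qed.

Lemma sub_gen R R' s : ssub R R' -> ssub (gen R s) (gen R' s).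
Proof.
move=> hR; elim: s => [|a s IH] x //=.
by move=> [r [y [/hR Hr /IH Hy ->]]]; exists r, y.
Qed.

Lemma gen_catl R s1 s2 : is_subring R -> ssub (gen R s1) (gen R (s1 ++ s2)).
Proof.
move=> hR; apply: gen_sub_module; first exact: gen_module.
by move=> y hy; apply: mem_gen; rewrite ?mem_cat ?hy.
Qed.

Lemma gen_catr R s1 s2 : is_subring R -> ssub (gen R s2) (gen R (s1 ++ s2)).
Proof.
move=> hR; apply: gen_sub_module; first exact: gen_module.
by move=> y hy; apply: mem_gen; rewrite ?mem_cat ?hy ?orbT.
Qed.

Lemma gen_map_mull R s x y :
  gen R (map (fun a => x * a) s) y <-> scale x (gen R s) y.
Proof.
elim: s y => [|a s IH] y /=; split.
- by move=> ->; exists 0; rewrite mulr0.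
- by move=> [e [-> ->]]; rewrite mulr0.
- move=> [r [y' [Hr /IH [e [He ->]] ->]]].
  by exists (r * a + e); split; [exists r, e | ring].
- move=> [e [[r [y' [Hr Hy' ->]]] ->]].
  by exists r, (x * y'); split => //; [apply/IH; exists y' | ring].
Qed.

Lemma subring_fgmod R : is_subring R -> fgmod R R.
Proof.
move=> hR; split; first exact: subring_Fbar.
exists [:: 1] => x; split.
- by move=> Rx; exists x, 0; split=> //; rewrite mulr1 addr0.
- move: x; apply: gen_sub_module (subring_module hR) _ => y.
  by rewrite mem_seq1 => /eqP ->; case: hR.
Qed.

Lemma fgmod_gen R s x : is_subring R -> x != 0 -> gen R s x -> fgmod R (gen R s).
Proof.
move=> hR nx hx; split; last by exists s.
by split; [exact: gen_module | exists x].
Qed.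

Lemma ext_module R E : is_subring R -> is_module R (ext R E).
Proof.
move=> hR; split.
- by exists [::].
- move=> x y [s1 [h1 g1]] [s2 [h2 g2]]; exists (s1 ++ s2); split.
  + by move=> y'; rewrite mem_cat => /orP [] ?; auto.
  + have [_ GD _] := gen_module (s1 ++ s2) hR.
    by apply: GD; [apply: gen_catl | apply: gen_catr].
- move=> r x hr [s [hs g]]; exists s; split=> //.
  by have [_ _ GM] := gen_module s hR; apply: GM.
Qed.

Lemma ext_sub_module R E M : is_module R M -> ssub E M -> ssub (ext R E) M.
Proof. by move=> hM hE x [s [hs hx]]; apply: (gen_sub_module hM _ hx) => y /hs /hE. Qed.

Lemma ext_sub_subring R E : is_subring R -> ssub E R -> ssub (ext R E) R.
Proof. by move=> hR; apply: ext_sub_module (subring_module hR). Qed.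

Lemma sub_ext R E : is_subring R -> ssub E (ext R E).
Proof.
move=> hR x Ex; exists [:: x]; split.
- by move=> y; rewrite mem_seq1 => /eqP ->.
- by apply: mem_gen; rewrite ?mem_head.
Qed.

Lemma ext_gen R E s : is_subring R ->
  (forall y, y \in s -> E y) -> ssub E (gen R s) -> ext R E = gen R s.
Proof.
move=> hR hs hE; apply: sseq_eq => x; split.
- by apply: ext_sub_module => //; apply: gen_module.
- by move: x; apply: gen_sub_module (ext_module E hR) _ => y /hs; apply: sub_ext.
Qed.

Lemma fgmod_ext R R' F :
  is_subring R -> is_subring R' -> ssub R' R -> fgmod R' F -> fgmod R (ext R F).
Proof.
move=> hR hR' hR'R [[_ [x [nx Fx]]] [s /sseq_eq eF]]; subst F.
rewrite (@ext_gen R _ s) //; last exact: sub_gen.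
- exact: fgmod_gen hR nx (sub_gen hR'R Fx).
- by move=> y; apply: mem_gen.
Qed.

Lemma fgmod_ext_union R R1 R2 A B :
  is_subring R -> is_subring R1 -> is_subring R2 -> ssub R1 R -> ssub R2 R ->
  fgmod R1 A -> fgmod R2 B -> fgmod R (ext R (fun x => A x \/ B x)).
Proof.
move=> hR hR1 hR2 h1 h2 [[_ [x [nx Ax]]] [s1 /sseq_eq eA]] [_ [s2 /sseq_eq eB]].
subst A B; rewrite (@ext_gen R _ (s1 ++ s2)) //.
- exact: fgmod_gen hR nx (gen_catl _ hR (sub_gen h1 Ax)).
- by move=> y; rewrite mem_cat => /orP [] hy; [left | right]; apply: mem_gen.
- move=> y [] hy; [apply: gen_catl | apply: gen_catr] => //; exact: sub_gen hy.
Qed.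

Lemma fgmod_scale R F x : is_subring R -> x != 0 -> fgmod R F -> fgmod R (scale x F).
Proof.
move=> hR nx [[_ [e [ne Fe]]] [s /sseq_eq eF]]; subst F.
have -> : scale x (gen R s) = gen R (map (fun a => x * a) s).
  by apply: sseq_eq => y; split => /gen_map_mull.
apply: (fgmod_gen hR (mulf_neq0 nx ne)).
by apply/gen_map_mull; exists e.
Qed.

Lemma scaleV_sub E F x : x != 0 -> ssub F (scale x E) -> ssub (scale x^-1 F) E.
Proof. by move=> nx h y [f [/h [e [Ee ->]] ->]]; rewrite mulKf. Qed.

Lemma t_op_sub_subring R E : is_subring R -> ssub E R -> ssub (t_op R E) R.
Proof.
move=> hR hER y [G [_ hGE hv]].
have : R (y * 1) by apply: hv => g /hGE /hER; rewrite mul1r.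
by rewrite mulr1.
Qed.

Lemma t_op_eq_subring_iff R M : is_subring R -> fgmod R M -> ssub M R ->
  sseq (t_op R M) (t_op R R) <-> ssub (colon R M) R.
Proof.
move=> hR hM hMR; split=> [ht z hz | hcol y].
- have R1 : t_op R R 1.
    exists R; split=> //; first exact: subring_fgmod.
    by move=> e /(_ 1); rewrite mulr1 mul1r; apply; case: hR.
  have [H [_ hHM hv]] := (ht 1).2 R1.
  by rewrite -[z]mul1r; apply: hv => h /hHM /hz.
- split=> [[G [hG hGM hv]] | hy]; first by exists G; split=> // g /hGM /hMR.
  exists M; split=> // e /hcol Re; have [_ _ _ RM] := hR.
  by apply: RM => //; apply: t_op_sub_subring hy.
Qed.

End Modules.

Section DirectFamily.
Variables (K : fieldType) (D : K -> Prop) (L : Type).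
Variables (Tl : L -> K -> Prop) (stl : L -> semistar_op K).
Hypothesis family : direct_family D Tl stl.
Hypothesis L_nonempty : inhabited L.
Implicit Types (a b c l : L) (E F G H : K -> Prop) (s : seq K) (x y z : K).
Local Notation T := (union_ring Tl).
Local Notation astL := (star_Lambda Tl stl).

Lemma Tl_subring l : is_subring (Tl l).
Proof. by case: family => /(_ l) []. Qed.

Lemma sub_Tl l : ssub D (Tl l).
Proof. by case: family => /(_ l) []. Qed.

Lemma Tl_semistar l : is_semistar (Tl l) (stl l).
Proof. by case: family. Qed.

Lemma Tl_directed a b : exists c, ssub (Tl a) (Tl c) /\ ssub (Tl b) (Tl c).
Proof. by case: family. Qed.

Lemma Tl_sub_union l : ssub (Tl l) T.
Proof. by move=> x; exists l. Qed.

Arguments sub_Tl : clear implicits.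
Arguments Tl_sub_union : clear implicits.

Lemma sub_union_ring : ssub D T.
Proof. by have [l] := L_nonempty; move=> x /(sub_Tl l); exists l. Qed.

Lemma union_ring_subring : is_subring T.
Proof.
have [l] := L_nonempty.
have closed (op : K -> K -> K) :
    (forall l x y, Tl l x -> Tl l y -> Tl l (op x y)) ->
    forall x y, T x -> T y -> T (op x y).
  move=> hop x y [a ha] [b hb]; have [c [hac hbc]] := Tl_directed a b.
  by exists c; apply: hop; [apply: hac | apply: hbc].
split; [by exists l; case: (Tl_subring l) | by exists l; case: (Tl_subring l) | |].
- by apply: closed => l'; case: (Tl_subring l').
- by apply: closed => l'; case: (Tl_subring l').
Qed.

Lemma seq_in_Tl s l : (forall y, y \in s -> T y) ->
  exists c, ssub (Tl l) (Tl c) /\ forall y, y \in s -> Tl c y.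
Proof.
elim: s => [|w s IH] hs; first by exists l; split=> // y.
have /IH [c1 [hlc1 hsc1]] : forall y, y \in s -> T y.
  by move=> y hy; apply: hs; rewrite inE hy orbT.
have [b hb] := hs w (mem_head w s).
have [c [hc1c hbc]] := Tl_directed c1 b.
exists c; split=> [x /hlc1 /hc1c // | y].
by rewrite inE => /predU1P [-> | /hsc1 /hc1c]; first exact: hbc.
Qed.

Lemma Fbar_union_module E l : Fbar T E -> is_module (Tl l) E.
Proof. by case=> hE _; apply: module_restrict_scalars (Tl_sub_union l) hE. Qed.

Lemma stl_sub_up a c G H : ssub (Tl a) (Tl c) -> fgmod (Tl a) G ->
  Fbar (Tl c) H -> ssub G H -> ssub (stl a G) (stl c H).
Proof.
move=> hac hG hH hGH y hy.
have [_ _ _ /(_ a c G hac hG y hy) hy'] := family.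
have [_ _ smo _ _] := Tl_semistar c.
apply: (smo _ H _ hH _ y hy').
- exact: (fgmod_ext (Tl_subring c) (Tl_subring a) hac hG).1.
- by apply: ext_sub_module hGH; case: hH.
Qed.

Lemma star_Lambda_seq E s l : Fbar T E -> (forall y, y \in s -> astL E y) ->
  exists c G, [/\ ssub (Tl l) (Tl c), fgmod (Tl c) G, ssub G E &
                  forall y, y \in s -> stl c G y].
Proof.
move=> hE; elim: s => [|w s IH] hs.
  have [_ [x [nx Ex]]] := hE; have hR := Tl_subring l.
  exists l, (gen (Tl l) [:: x]); split=> //.
  - exact: fgmod_gen hR nx (mem_gen hR (mem_head _ _)).
  - apply: gen_sub_module (Fbar_union_module l hE) _ => y.
    by rewrite mem_seq1 => /eqP ->.
have /IH [c1 [G1 [hlc1 hG1 hG1E hsG1]]] : forall y, y \in s -> astL E y.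
  by move=> y hy; apply: hs; rewrite inE hy orbT.
have [b [F [hF hFE hwF]]] := hs w (mem_head w s).
have [c [hc1c hbc]] := Tl_directed c1 b.
have hR := Tl_subring c.
have hG := fgmod_ext_union hR (Tl_subring c1) (Tl_subring b) hc1c hbc hG1 hF.
exists c, (ext (Tl c) (fun x => G1 x \/ F x)); split=> //.
- by move=> x /hlc1 /hc1c.
- by apply: ext_sub_module (Fbar_union_module c hE) _ => x [/hG1E | /hFE].
- move=> y; rewrite inE => /predU1P [-> | /hsG1 hy].
  + by apply: (stl_sub_up hbc hF hG.1 _ hwF) => x hx; apply: sub_ext => //; right.
  + by apply: (stl_sub_up hc1c hG1 hG.1 _ hy) => x hx; apply: sub_ext => //; left.
Qed.

Lemma star_Lambda_extensive E : Fbar T E -> ssub E (astL E).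
Proof.
move=> hE x Ex; have [l] := L_nonempty; have [_ [x0 [nx0 Ex0]]] := hE.
have hR := Tl_subring l.
have hG : fgmod (Tl l) (gen (Tl l) [:: x; x0]).
  by apply: (fgmod_gen hR nx0); apply: (mem_gen hR); rewrite !inE eqxx orbT.
exists l, (gen (Tl l) [:: x; x0]); split=> //.
- apply: gen_sub_module (Fbar_union_module l hE) _ => y.
  by rewrite !inE => /orP [] /eqP ->.
- have [_ _ _ sext _] := Tl_semistar l.
  by apply: (sext _ hG.1); apply: (mem_gen hR); rewrite !inE eqxx.
Qed.

Lemma star_Lambda_Fbar E : Fbar T E -> Fbar T (astL E).
Proof.
move=> hE; have [[E0 _ _] [x [nx Ex]]] := hE.
split; last by exists x; split=> //; apply: star_Lambda_extensive.
have [l0] := L_nonempty.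
split; first exact: star_Lambda_extensive.
- move=> x1 x2 hx1 hx2.
  have [|c [G [_ hG hGE hsG]]] := star_Lambda_seq l0 (s := [:: x1; x2]) hE.
    by move=> y; rewrite !inE => /orP [] /eqP ->.
  exists c, G; split=> //.
  have [/(_ G hG.1) [[_ GD _] _] _ _ _ _] := Tl_semistar c.
  by apply: GD; apply: hsG; rewrite !inE eqxx ?orbT.
- move=> r x1 [l hr] hx1.
  have [|c [G [hlc hG hGE hsG]]] := star_Lambda_seq l (s := [:: x1]) hE.
    by move=> y; rewrite inE => /eqP ->.
  exists c, G; split=> //.
  have [/(_ G hG.1) [[_ _ GM] _] _ _ _ _] := Tl_semistar c.
  by apply: GM; [exact: hlc | apply: hsG; rewrite inE].
Qed.

Lemma star_Lambda_scale x E : x != 0 -> sseq (astL (scale x E)) (scale x (astL E)).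
Proof.
move=> nx y; split.
- move=> [l [F [hF hFE hy]]].
  have [_ ssc _ _ _] := Tl_semistar l.
  have nxV : x^-1 != 0 by rewrite invr_eq0.
  exists (x^-1 * y); split; last by rewrite mulrA divff // mul1r.
  exists l, (scale x^-1 F); split.
  + exact: fgmod_scale (Tl_subring l) nxV hF.
  + exact: scaleV_sub nx hFE.
  + by apply: (ssc _ _ nxV hF.1 _).2; exists y.
- move=> [e [[l [F [hF hFE he]]] ->]].
  have [_ ssc _ _ _] := Tl_semistar l.
  exists l, (scale x F); split.
  + exact: fgmod_scale (Tl_subring l) nx hF.
  + by move=> z [f [/hFE Ef ->]]; exists f.
  + by apply: (ssc _ _ nx hF.1 _).2; exists e.
Qed.

Lemma star_Lambda_idem E : Fbar T E -> ssub (astL (astL E)) (astL E).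
Proof.
move=> hE y [l [F [hF hFA hy]]].
have [_ [s /sseq_eq eF]] := hF; subst F.
have [c [G [hlc hG hGE hsG]]] :=
  star_Lambda_seq l hE (fun z hz => hFA z (mem_gen (Tl_subring l) hz)).
have [sF _ _ _ sid] := Tl_semistar c.
have hsG' : ssub (gen (Tl l) s) (stl c G).
  apply: gen_sub_module hsG.
  exact: module_restrict_scalars hlc (sF G hG.1).1.
exists c, G; split=> //.
by apply: (sid G hG.1 y).1; exact: stl_sub_up hlc hF (sF G hG.1) hsG' _ hy.
Qed.

Lemma star_Lambda_semistar : is_semistar T astL.
Proof.
split.
- exact: star_Lambda_Fbar.
- by move=> x E nx _; apply: star_Lambda_scale.
- by move=> E F _ _ hEF y [l [G [hG hGE hy]]]; exists l, G; split=> // z /hGE /hEF.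
- exact: star_Lambda_extensive.
- move=> E hE y; split; first exact: star_Lambda_idem.
  by apply: star_Lambda_extensive; apply: star_Lambda_Fbar.
Qed.

Lemma star_Lambda_finite_type : finite_type T astL.
Proof.
move=> E hE y; split.
- move=> [l [F [hF hFE hy]]]; exists (ext T F); split.
  + exact: fgmod_ext union_ring_subring (Tl_subring l) (Tl_sub_union l) hF.
  + by apply: ext_sub_module hFE; case: hE.
  + by exists l, F; split=> //; apply: sub_ext union_ring_subring.
- move=> [G [_ hGE [l [F [hF hFG hy]]]]].
  by exists l, F; split=> // z /hFG /hGE.
Qed.

Lemma linked_union_ring star : is_subring D ->
  (forall l, linked D star (Tl l) (stl l)) -> linked D star T astL.
Proof.
move=> hD hlink F hF hFD hst y; split.
  have [_ _ smo _ _] := star_Lambda_semistar.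
  apply: smo; first exact: (fgmod_ext union_ring_subring hD sub_union_ring hF).1.
  - exact: subring_Fbar union_ring_subring.
  - by apply: ext_sub_subring union_ring_subring _ => z /hFD /sub_union_ring.
move=> [l [G [hG hGT hy]]].
have [_ [s /sseq_eq eG]] := hG; subst G.
have [c [hlc hsc]] := seq_in_Tl l (fun z hz => hGT z (mem_gen (Tl_subring l) hz)).
have hR := Tl_subring c.
have hyc : stl c (Tl c) y.
  apply: (stl_sub_up hlc hG (subring_Fbar hR) _ hy).
  exact: gen_sub_module (module_restrict_scalars hlc (subring_module hR)) hsc.
exists c, (ext (Tl c) F); split.
- exact: fgmod_ext hR hD (sub_Tl c) hF.
- apply: ext_sub_module (sub_ext union_ring_subring).
  exact: module_restrict_scalars (Tl_sub_union c) (ext_module F union_ring_subring).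
- exact: (hlink c F hF hFD hst y).2.
Qed.

Lemma colon_union_ring_sub F : is_subring D -> fgmod D F ->
  (forall l, ssub (colon (Tl l) (ext (Tl l) F)) (Tl l)) ->
  ssub (colon T (ext T F)) T.
Proof.
move=> hD [_ [s /sseq_eq eF]] hcol z hz; subst F.
have [l] := L_nonempty.
have hzs : forall y, y \in map (fun x => z * x) s -> T y.
  move=> _ /mapP [w hw ->]; apply: hz.
  exact: sub_ext union_ring_subring _ (mem_gen hD hw).
have [c [_ hc]] := seq_in_Tl l hzs; have hR := Tl_subring c.
apply: (Tl_sub_union c); apply: (hcol c) => e.
move/(ext_sub_module (gen_module s hR) (sub_gen (sub_Tl c))).
apply: gen_sub_module (mull_preim_module z hR) _ e => w hw.
exact: hc (map_f _ hw).
Qed.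

Lemma linked_union_ring_t_op star : is_subring D ->
  (forall l, linked D star (Tl l) (t_op (Tl l))) -> linked D star T (t_op T).
Proof.
move=> hD hlink F hF hFD hst.
have ext_F R : is_subring R -> ssub D R -> fgmod R (ext R F) /\ ssub (ext R F) R.
  move=> hR hDR; split; first exact: fgmod_ext hR hD hDR hF.
  by apply: ext_sub_subring hR _ => x /hFD /hDR.
have [hfg hsub] := ext_F _ union_ring_subring sub_union_ring.
apply/(t_op_eq_subring_iff union_ring_subring hfg hsub).
apply: (colon_union_ring_sub hD hF) => l.
have [hfgl hsubl] := ext_F _ (Tl_subring l) (sub_Tl l).
apply/(t_op_eq_subring_iff (Tl_subring l) hfgl hsubl).
exact: hlink.
Qed.

End DirectFamily.

Theorem lemma3p5 (K : fieldType) (D : K -> Prop) (star : semistar_op K)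
  (L : Type) (Tl : L -> K -> Prop) (stl : L -> semistar_op K) :
  is_subring D -> is_quotient_field D ->
  is_semistar D star ->
  inhabited L ->
  direct_family D Tl stl ->
  let T := union_ring Tl in
  let astL := star_Lambda Tl stl in
  [/\ is_semistar T astL /\ finite_type T astL,
      (forall l, linked D star (Tl l) (stl l)) -> linked D star T astL &
      (forall l, linked D star (Tl l) (t_op (Tl l))) -> linked D star T (t_op T)].
Proof.
move=> hD _ _ hL hfam T astL; split.
- by split; [exact: star_Lambda_semistar hfam hL | exact: star_Lambda_finite_type hfam hL].
- exact: (linked_union_ring hfam hL (star := star) hD).
- exact: (linked_union_ring_t_op hfam hL (star := star) hD).
Qed.
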